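(* Let $p>0$ and let $f$ be twice continuously differentiable on $[0,p]$, such that $f'''$ exists and is bounded in a neighborhood of $s=0$. Then, as $b\to 0^+$, $$\int_0^p f(s)\left(\sqrt{s^2+b^2}-s\right)ds=-\frac{f(0)}{2}\,b^2\ln b+\left(\frac{f(0)}{4}+\frac{f(0)\ln 2}{2}+\frac{f(p)\ln p}{2}-\frac12\int_0^p f'(s)\ln s\,ds\right)b^2+O(b^3).$$ *)

From Stdlib Require Import Reals Lra.
Open Scope R_scope.

Definition has_deriv_on (g g' : R -> R) (a b : R) : Prop :=
  forall x, a <= x <= b ->
    limit1_in (fun h => (g (x + h) - g x) / h)
              (fun h => h <> 0 /\ a <= x + h <= b) (g' x) 0.

Definition cont_on (g : R -> R) (a b : R) : Prop :=
  forall x, a <= x <= b -> limit1_in g (fun y => a <= y <= b) (g x) x.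

Definition is_RInt (g : R -> R) (a b v : R) : Prop :=
  exists pr : Riemann_integrable g a b, RiemannInt pr = v.

Definition improper_int0 (g : R -> R) (p I : R) : Prop :=
  forall eps, 0 < eps -> exists del, 0 < del /\
    forall e, 0 < e < del -> e < p ->
      exists v, is_RInt g e p v /\ Rabs (v - I) < eps.

(* Write f s = f 0 + s q s with q the divided difference, and put
   g_b s = sqrt (s^2 + b^2) - s.  Then b^2/2 - s g_b s is nonnegative with
   integral over [0,p] at most b^3/3, so
     int_0^p f g_b = f 0 int_0^p g_b + (b^2/2) int_0^p q + O(b^3),
   where int_0^p g_b is explicit and has the expansion of the statement with
   f = 1.  Integrating by parts against f - f 0 gives
     int_e^p f' ln = (f p - f 0) ln p - (f e - f 0) ln e - int_e^p q,
   which converges as e -> 0 and identifies int_0^p q. *)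

From Coquelicot Require Import Coquelicot.
From Stdlib Require Import Reals Lra Psatz.
Open Scope R_scope.

Ltac continuity_pt_tac :=
  repeat first
    [ solve [auto]
    | apply continuity_pt_const; intros ? ?; reflexivity
    | apply derivable_continuous_pt, derivable_pt_id
    | apply continuity_pt_minus
    | apply continuity_pt_plus
    | apply continuity_pt_opp
    | apply continuity_pt_mult ].

Lemma has_deriv_on_spec g g' a b x : has_deriv_on g g' a b -> a <= x <= b ->
  forall eps, 0 < eps -> exists alp, 0 < alp /\ forall h, h <> 0 -> a <= x + h <= b ->
    Rabs h < alp -> Rabs ((g (x + h) - g x) / h - g' x) < eps.
Proof.
  intros H hx eps heps. destruct (H x hx eps heps) as [alp [halp Hq]].
  exists alp. split; [exact halp|]. intros h h0 hr hl.
  apply (Hq h). split; [tauto|]. simpl. unfold R_dist. rewrite Rminus_0_r. exact hl.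
Qed.

Lemma has_deriv_on_continuous_within g g' a b x : has_deriv_on g g' a b -> a <= x <= b ->
  forall eps, 0 < eps -> exists d, 0 < d /\
    forall y, a <= y <= b -> Rabs (y - x) < d -> Rabs (g y - g x) < eps.
Proof.
  intros H hx eps heps.
  destruct (has_deriv_on_spec g g' a b x H hx 1 Rlt_0_1) as [alp [halp Hq]].
  set (M := Rabs (g' x) + 1).
  assert (hM : 0 < M) by (unfold M; pose proof (Rabs_pos (g' x)); lra).
  exists (Rmin alp (eps / M)). split.
  { apply Rmin_glb_lt; [exact halp | apply Rdiv_lt_0_compat; lra]. }
  intros y hy hyx.
  destruct (Req_dec y x) as [->|hne]; [rewrite Rminus_diag, Rabs_R0; exact heps|].
  assert (hq := Hq (y - x) ltac:(lra)). replace (x + (y - x)) with y in hq by ring.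
  set (q := (g y - g x) / (y - x)) in hq.
  assert (hqM : Rabs q <= M).
  { assert (Rabs (q - g' x) < 1) by (apply hq; [exact hy | eapply Rlt_le_trans; [exact hyx | apply Rmin_l]]).
    replace q with ((q - g' x) + g' x) by ring. pose proof (Rabs_triang (q - g' x) (g' x)).
    unfold M; lra. }
  assert (hyx' : Rabs (y - x) * M < eps).
  { apply (Rmult_lt_reg_r (/ M)); [apply Rinv_0_lt_compat; lra|].
    rewrite Rmult_assoc, Rinv_r by lra. rewrite Rmult_1_r.
    eapply Rlt_le_trans; [exact hyx | apply Rmin_r]. }
  replace (g y - g x) with ((y - x) * q) by (unfold q; field; lra).
  rewrite Rabs_mult. pose proof (Rabs_pos (y - x)). nra.
Qed.

Definition clamp (p s : R) : R := Rmax 0 (Rmin p s).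

(* C^1 on all of R when f is C^1 on [0,p]; the FTC of Coquelicot needs
   two-sided derivatives at the endpoints. *)
Definition lin_ext (p : R) (f f1 : R -> R) (s : R) : R :=
  f (clamp p s) + f1 (clamp p s) * (s - clamp p s).

Section TangentExtension.

Variable p : R.
Hypothesis hp : 0 < p.

Lemma clamp_id s : 0 <= s <= p -> clamp p s = s.
Proof. intros. unfold clamp, Rmax, Rmin; repeat destruct Rle_dec; lra. Qed.

Lemma clamp_lt s : s < 0 -> clamp p s = 0.
Proof. intros. unfold clamp, Rmax, Rmin; repeat destruct Rle_dec; lra. Qed.

Lemma clamp_gt s : p < s -> clamp p s = p.
Proof. intros. unfold clamp, Rmax, Rmin; repeat destruct Rle_dec; lra. Qed.

Lemma clamp_range s : 0 <= clamp p s <= p.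
Proof. unfold clamp, Rmax, Rmin; repeat destruct Rle_dec; lra. Qed.

Lemma clamp_lipschitz s t : Rabs (clamp p s - clamp p t) <= Rabs (s - t).
Proof.
  unfold clamp, Rmax, Rmin; repeat destruct Rle_dec; unfold Rabs; repeat destruct Rcase_abs; lra.
Qed.

Lemma endpoint_margin x : 0 <= x <= p -> exists m, 0 < m /\
  forall y, Rabs (y - x) < m -> (y < 0 -> x = 0) /\ (p < y -> x = p).
Proof.
  intros hx.
  destruct (Req_dec x 0) as [->|h0].
  { exists p. split; [exact hp|]. intros y hy. apply Rabs_def2 in hy. lra. }
  destruct (Req_dec x p) as [->|h1].
  { exists p. split; [exact hp|]. intros y hy. apply Rabs_def2 in hy. lra. }
  exists (Rmin x (p - x)). split; [apply Rmin_glb_lt; lra|].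
  intros y hy. apply Rabs_def2 in hy.
  pose proof (Rmin_l x (p - x)). pose proof (Rmin_r x (p - x)). lra.
Qed.

Variables f f1 : R -> R.

Lemma lin_ext_id s : 0 <= s <= p -> lin_ext p f f1 s = f s.
Proof. intros hs. unfold lin_ext. rewrite clamp_id by exact hs. ring. Qed.

Lemma lin_ext_lt s : s < 0 -> lin_ext p f f1 s = f 0 + f1 0 * s.
Proof. intros hs. unfold lin_ext. rewrite clamp_lt by exact hs. ring. Qed.

Lemma lin_ext_gt s : p < s -> lin_ext p f f1 s = f p + f1 p * (s - p).
Proof. intros hs. unfold lin_ext. rewrite clamp_gt by exact hs. reflexivity. Qed.

Lemma derivable_pt_lim_lin_ext x : has_deriv_on f f1 0 p ->
  derivable_pt_lim (lin_ext p f f1) x (f1 (clamp p x)).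
Proof.
  intros Hf eps heps.
  destruct (Rlt_dec x 0) as [hx0|hx0].
  { exists (mkposreal (- x) ltac:(lra)). simpl. intros h h0 hh. apply Rabs_def2 in hh.
    rewrite clamp_lt, !lin_ext_lt by lra.
    replace ((f 0 + f1 0 * (x + h) - (f 0 + f1 0 * x)) / h - f1 0) with 0 by (field; exact h0).
    rewrite Rabs_R0; exact heps. }
  destruct (Rlt_dec p x) as [hxp|hxp].
  { exists (mkposreal (x - p) ltac:(lra)). simpl. intros h h0 hh. apply Rabs_def2 in hh.
    rewrite clamp_gt, !lin_ext_gt by lra.
    replace ((f p + f1 p * (x + h - p) - (f p + f1 p * (x - p))) / h - f1 p) with 0 by (field; exact h0).
    rewrite Rabs_R0; exact heps. }
  assert (hx : 0 <= x <= p) by lra.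
  rewrite clamp_id, (lin_ext_id x) by exact hx.
  destruct (has_deriv_on_spec f f1 0 p x Hf hx eps heps) as [alp [halp Hq]].
  destruct (endpoint_margin x hx) as [m [hm Hm]].
  exists (mkposreal (Rmin alp m) (Rmin_glb_lt _ _ _ halp hm)). simpl. intros h h0 hh.
  assert (h1 : Rabs h < alp) by (eapply Rlt_le_trans; [exact hh | apply Rmin_l]).
  destruct (Hm (x + h)) as [Hlt Hgt].
  { replace (x + h - x) with h by ring. eapply Rlt_le_trans; [exact hh | apply Rmin_r]. }
  destruct (Rlt_dec (x + h) 0) as [c0|c0]; [|destruct (Rlt_dec p (x + h)) as [c1|c1]].
  - specialize (Hlt c0). subst x. rewrite lin_ext_lt by exact c0.
    replace ((f 0 + f1 0 * (0 + h) - f 0) / h - f1 0) with 0 by (field; exact h0).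
    rewrite Rabs_R0; exact heps.
  - specialize (Hgt c1). subst x. rewrite lin_ext_gt by exact c1.
    replace ((f p + f1 p * (p + h - p) - f p) / h - f1 p) with 0 by (field; exact h0).
    rewrite Rabs_R0; exact heps.
  - rewrite lin_ext_id by lra. apply Hq; [exact h0 | lra | exact h1].
Qed.

Lemma continuity_pt_clamp_comp g g' x : has_deriv_on g g' 0 p ->
  continuity_pt (fun s => g (clamp p s)) x.
Proof.
  intros Hg eps heps.
  destruct (has_deriv_on_continuous_within g g' 0 p (clamp p x) Hg (clamp_range x) eps heps)
    as [d [hd K]].
  exists d. split; [exact hd|]. intros y [_ hy]. simpl in *. unfold R_dist in *.
  apply K; [apply clamp_range|]. eapply Rle_lt_trans; [apply clamp_lipschitz | exact hy].
Qed.

End TangentExtension.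

Definition divdiff (F : R -> R) (c s : R) : R :=
  if Req_EM_T s 0 then c else (F s - F 0) / s.

Lemma divdiff_spec F c s : F s = F 0 + s * divdiff F c s.
Proof. unfold divdiff. destruct Req_EM_T as [->|hs]; [ring | field; exact hs]. Qed.

Lemma continuity_pt_divdiff F F' x : (forall y, derivable_pt_lim F y (F' y)) ->
  continuity_pt (divdiff F (F' 0)) x.
Proof.
  intros HF.
  destruct (Req_dec x 0) as [->|hx].
  - intros eps heps. destruct (HF 0 eps heps) as [d K].
    exists d. split; [apply cond_pos|]. intros y [_ hy]. simpl in *. unfold R_dist in *.
    rewrite Rminus_0_r in hy. unfold divdiff.
    destruct (Req_EM_T 0 0) as [_|]; [|lra].
    destruct (Req_EM_T y 0) as [->|hy0]; [rewrite Rminus_diag, Rabs_R0; exact heps|].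
    specialize (K y hy0 hy). rewrite Rplus_0_l in K. exact K.
  - apply (continuity_pt_locally_ext (fun s => (F s - F 0) / s) _ (Rabs x));
      [apply Rabs_pos_lt, hx | |].
    + intros y hy. unfold Rdist in hy. unfold divdiff.
      destruct Req_EM_T as [->|]; [|reflexivity].
      rewrite Rminus_0_l, Rabs_Ropp in hy. lra.
    + assert (HFc : continuity_pt F x) by (apply derivable_continuous_pt; exists (F' x); apply HF).
      apply continuity_pt_div; [continuity_pt_tac | continuity_pt_tac | exact hx].
Qed.

Lemma bounded_on_of_continuity_pt (g : R -> R) a b : a <= b ->
  (forall x, continuity_pt g x) ->
  exists L, forall s, a <= s <= b -> Rabs (g s) <= L.
Proof.
  intros hab H.
  destruct (continuity_ab_maj (fun s => Rabs (g s)) a b hab) as [M [HM _]].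
  { intros c _. apply continuity_pt_comp with (f1 := g) (f2 := Rabs); [apply H|].
    apply Rcontinuity_abs. }
  exists (Rabs (g M)). exact HM.
Qed.

Lemma continuity_pt_ln x : 0 < x -> continuity_pt ln x.
Proof. intros hx. apply derivable_continuous_pt. exists (/ x). apply derivable_pt_lim_ln, hx. Qed.

Lemma ex_RInt_continuity_pt g a b : a <= b ->
  (forall x, a <= x <= b -> continuity_pt g x) -> ex_RInt g a b.
Proof.
  intros hab H. apply (@ex_RInt_continuous R_CompleteNormedModule).
  rewrite Rmin_left, Rmax_right by exact hab.
  intros z hz. apply continuity_pt_filterlim, H, hz.
Qed.

Lemma RInt_Rplus f g a b : ex_RInt f a b -> ex_RInt g a b ->
  RInt (fun x => f x + g x) a b = RInt f a b + RInt g a b :> R.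
Proof. intros Hf Hg. exact (RInt_plus f g a b Hf Hg). Qed.

Lemma RInt_Rmult_l c f a b : ex_RInt f a b ->
  RInt (fun x => c * f x) a b = c * RInt f a b :> R.
Proof. intros Hf. exact (RInt_scal f a b c Hf). Qed.

Lemma RInt_primitive G g a b : a <= b ->
  (forall x, a <= x <= b -> derivable_pt_lim G x (g x)) ->
  (forall x, a <= x <= b -> continuity_pt g x) -> RInt g a b = G b - G a :> R.
Proof.
  intros hab HG Hg. apply is_RInt_unique, (is_RInt_derive G g a b);
    rewrite Rmin_left, Rmax_right by exact hab; intros x hx.
  - apply is_derive_Reals, HG, hx.
  - apply continuity_pt_filterlim, Hg, hx.
Qed.

Lemma is_RInt_RInt_ext g h a b : a <= b -> ex_RInt g a b ->
  (forall x, a <= x <= b -> g x = h x) -> is_RInt h a b (RInt g a b).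
Proof.
  intros hab Hg Hgh.
  assert (Heq : forall x, Rmin a b < x < Rmax a b -> g x = h x).
  { rewrite Rmin_left, Rmax_right by exact hab. intros x hx. apply Hgh. lra. }
  assert (Hh : ex_RInt h a b) by (apply (ex_RInt_ext g); assumption).
  exists (ex_RInt_Reals_0 _ _ _ Hh). rewrite <- RInt_Reals. symmetry. apply RInt_ext, Heq.
Qed.

Lemma improper_int0_of_rate g p I K : 0 <= K ->
  (forall e, 0 < e < 1 -> e < p ->
     exists v, is_RInt g e p v /\ Rabs (v - I) <= K * sqrt e) ->
  improper_int0 g p I.
Proof.
  intros hK H eps heps.
  set (r := eps / (K + 1)).
  assert (hr : 0 < r) by (apply Rdiv_lt_0_compat; lra).
  exists (Rmin 1 (r ^ 2)). split; [apply Rmin_glb_lt; [lra | apply pow_lt, hr]|].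
  intros e he hep.
  pose proof (Rmin_l 1 (r ^ 2)). pose proof (Rmin_r 1 (r ^ 2)).
  destruct (H e ltac:(lra) hep) as [v [Hv Hb]]. exists v. split; [exact Hv|].
  assert (hse : sqrt e < r).
  { rewrite <- (sqrt_pow2 r) by lra. apply sqrt_lt_1_alt. lra. }
  assert (hre : (K + 1) * r = eps) by (unfold r; field; lra).
  pose proof (sqrt_pos e). nra.
Qed.

Lemma mul_abs_ln_le e : 0 < e < 1 -> e * Rabs (ln e) <= 2 * sqrt e.
Proof.
  intros he. set (r := sqrt e).
  assert (hr : 0 < r) by (apply sqrt_lt_R0; lra).
  assert (hrr : r * r = e) by (apply sqrt_sqrt; lra).
  assert (hl : ln e = 2 * ln r) by (rewrite <- hrr, ln_mult by exact hr; ring).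
  assert (hlr : ln r < 0) by (rewrite <- ln_1; apply ln_increasing; nra).
  (* [- ln r = ln (/ r) <= / r - 1] *)
  assert (hx : 1 + ln (/ r) <= / r).
  { rewrite <- (exp_ln (/ r)) at 2 by (apply Rinv_0_lt_compat, hr). apply exp_ineq1_le. }
  rewrite ln_Rinv in hx by exact hr.
  assert (r * - ln r <= 1).
  { apply (Rmult_le_reg_l (/ r)); [apply Rinv_0_lt_compat, hr|].
    rewrite <- Rmult_assoc, Rinv_l by lra. lra. }
  rewrite hl, Rabs_left, <- hrr by lra. nra.
Qed.

Definition kernel (b s : R) : R := sqrt (s ^ 2 + b ^ 2) - s.

Lemma sqrt_sum_sq_facts b s : 0 < b -> let S := sqrt (s ^ 2 + b ^ 2) in
  0 < S /\ S * S = s ^ 2 + b ^ 2 /\ s < S /\ 0 < s + S.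
Proof.
  intros hb S.
  assert (h0 : 0 < s ^ 2 + b ^ 2) by nra.
  assert (h1 : 0 < S) by (apply sqrt_lt_R0, h0).
  assert (h2 : S * S = s ^ 2 + b ^ 2) by (apply sqrt_sqrt; lra).
  repeat split; nra.
Qed.

Lemma derivable_pt_lim_kernel_primitive b s : 0 < b ->
  derivable_pt_lim
    (fun s => (s * sqrt (s ^ 2 + b ^ 2) + b ^ 2 * ln (s + sqrt (s ^ 2 + b ^ 2)) - s ^ 2) / 2)
    s (kernel b s).
Proof.
  intros hb. apply is_derive_Reals. unfold kernel.
  destruct (sqrt_sum_sq_facts b s hb) as [h1 [h2 [h3 h4]]].
  auto_derive; replace (s * (s * 1) + b * (b * 1)) with (s ^ 2 + b ^ 2) by ring.
  - repeat split; nra.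
  - set (S := sqrt (s ^ 2 + b ^ 2)) in *. field_simplify_eq; [nra | lra].
Qed.

Lemma derivable_pt_lim_kernel_moment_primitive b s : 0 < b ->
  derivable_pt_lim
    (fun s => b ^ 2 / 2 * s - ((s ^ 2 + b ^ 2) * sqrt (s ^ 2 + b ^ 2) - s ^ 3) / 3)
    s (b ^ 2 / 2 - s * kernel b s).
Proof.
  intros hb. apply is_derive_Reals. unfold kernel.
  destruct (sqrt_sum_sq_facts b s hb) as [h1 [h2 [h3 h4]]].
  auto_derive; replace (s * (s * 1) + b * (b * 1)) with (s ^ 2 + b ^ 2) by ring.
  - repeat split; nra.
  - set (S := sqrt (s ^ 2 + b ^ 2)) in *. field_simplify_eq; [nra | lra].
Qed.

Lemma continuity_pt_kernel b s : 0 < b -> continuity_pt (kernel b) s.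
Proof.
  intros hb. apply continuity_pt_filterlim, (@ex_derive_continuous R_AbsRing R_NormedModule).
  unfold kernel. auto_derive. repeat split; nra.
Qed.

Lemma RInt_kernel b p : 0 < b -> 0 <= p ->
  RInt (kernel b) 0 p =
  (p * sqrt (p ^ 2 + b ^ 2) + b ^ 2 * ln (p + sqrt (p ^ 2 + b ^ 2)) - p ^ 2) / 2
  - b ^ 2 * ln b / 2 :> R.
Proof.
  intros hb hp.
  rewrite (RInt_primitive _ _ 0 p hp (fun x _ => derivable_pt_lim_kernel_primitive b x hb)
             (fun x _ => continuity_pt_kernel b x hb)).
  replace (0 ^ 2 + b ^ 2) with (b ^ 2) by ring. rewrite sqrt_pow2 by lra.
  rewrite Rplus_0_l. field.
Qed.

Lemma mul_kernel_le b s : 0 < b -> s * kernel b s <= b ^ 2 / 2.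
Proof.
  intros hb. unfold kernel. destruct (sqrt_sum_sq_facts b s hb) as [h1 [h2 _]].
  set (S := sqrt (s ^ 2 + b ^ 2)) in *. nra.
Qed.

Lemma RInt_kernel_moment_defect_le b p : 0 < b -> 0 <= p ->
  RInt (fun s => b ^ 2 / 2 - s * kernel b s) 0 p <= b ^ 3 / 3.
Proof.
  intros hb hp.
  rewrite (RInt_primitive _ _ 0 p hp
             (fun x _ => derivable_pt_lim_kernel_moment_primitive b x hb)).
  2: { intros x _. assert (continuity_pt (kernel b) x) by (apply continuity_pt_kernel, hb).
       continuity_pt_tac. }
  replace (0 ^ 2 + b ^ 2) with (b ^ 2) by ring. rewrite sqrt_pow2 by lra.
  destruct (sqrt_sum_sq_facts b p hb) as [h1 [h2 [h3 _]]].
  set (S := sqrt (p ^ 2 + b ^ 2)) in *.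
  assert (0 <= (S - p) ^ 2 * (S + p / 2)) by (apply Rmult_le_pos; [apply pow2_ge_0 | lra]).
  nra.
Qed.

Lemma RInt_kernel_asymptotics b p : 0 < p -> 0 < b < 1 ->
  Rabs (RInt (kernel b) 0 p - (- b ^ 2 * ln b / 2 + (1 / 4 + ln 2 / 2 + ln p / 2) * b ^ 2))
    <= b ^ 3 / p ^ 2.
Proof.
  intros hp hb. rewrite RInt_kernel by lra.
  destruct (sqrt_sum_sq_facts b p ltac:(lra)) as [h1 [h2 [h3 h4]]].
  set (S := sqrt (p ^ 2 + b ^ 2)) in *.
  set (t := S - p).
  assert (ht : 0 <= t /\ t * (2 * p + t) = b ^ 2) by (unfold t; split; nra).
  set (ell := ln (1 + t / (2 * p))).
  assert (hln : ln (p + S) = ln 2 + ln p + ell).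
  { assert (0 <= t / (2 * p)) by (apply Rdiv_le_0_compat; lra).
    unfold ell. rewrite <- !ln_mult by nra. f_equal. unfold t. field. lra. }
  (* [0 <= ell <= t / (2 p)], from [ln (1 + x) <= x] *)
  assert (hell : 0 <= ell /\ ell * (2 * p) <= t).
  { assert (0 <= t / (2 * p)) by (apply Rdiv_le_0_compat; lra).
    split; [unfold ell; rewrite <- ln_1; apply ln_le; lra|].
    assert (K := exp_ineq1_le ell). unfold ell at 2 in K. rewrite exp_ln in K by lra.
    apply (Rmult_le_reg_r (/ (2 * p))); [apply Rinv_0_lt_compat; lra|].
    rewrite Rmult_assoc, Rinv_r, Rmult_1_r by lra. unfold Rdiv in K. lra. }
  rewrite hln.
  replace ((p * S + b ^ 2 * (ln 2 + ln p + ell) - p ^ 2) / 2 - b ^ 2 * ln b / 2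
           - (- b ^ 2 * ln b / 2 + (1 / 4 + ln 2 / 2 + ln p / 2) * b ^ 2))
    with (b ^ 2 * ell / 2 - t ^ 2 / 4) by (unfold t; lra).
  destruct ht as [ht0 htb]. destruct hell as [hell0 hell1].
  (* both terms are [O(b^4 / p^2)], since [2 p t <= b^2] *)
  assert (h2pt : 0 <= t * (2 * p) <= b ^ 2) by nra.
  assert (hell2 : 0 <= ell * p ^ 2 * 4 <= b ^ 2) by nra.
  assert (hb4 : b ^ 4 <= b ^ 3) by (assert (0 < b ^ 3) by (apply pow_lt; lra); nra).
  assert (hlog_term : 0 <= b ^ 2 * ell / 2 * p ^ 2 <= b ^ 3) by (split; nra).
  assert (hsq_term : 0 <= t ^ 2 / 4 * p ^ 2 <= b ^ 3) by (split; nra).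
  assert (hp2 : 0 < p ^ 2) by nra.
  apply (Rmult_le_reg_r (p ^ 2) _ _ hp2).
  replace (b ^ 3 / p ^ 2 * p ^ 2) with (b ^ 3) by (field; lra).
  rewrite <- (Rabs_pos_eq (p ^ 2)), <- Rabs_mult by lra.
  apply Rabs_le. split; lra.
Qed.

Section DividedDifference.

Variables (p : R) (F F' : R -> R).
Hypothesis hp : 0 < p.
Hypothesis HF : forall x, derivable_pt_lim F x (F' x).
Hypothesis HF' : forall x, continuity_pt F' x.

Let q := divdiff F (F' 0).
Let I := (F p - F 0) * ln p - RInt q 0 p.

Variable L : R.
Hypothesis HL : forall s, 0 <= s <= p -> Rabs (q s) <= L.

Let L_nonneg : 0 <= L.
Proof. eapply Rle_trans; [apply Rabs_pos | apply (HL 0); lra]. Qed.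

Let continuity_pt_q x : continuity_pt q x.
Proof. apply continuity_pt_divdiff, HF. Qed.

Let ex_RInt_q a c : a <= c -> ex_RInt q a c.
Proof. intros hac. apply ex_RInt_continuity_pt; [exact hac | intros; apply continuity_pt_q]. Qed.

(* Integration by parts against [F - F 0] rather than [F]: the boundary term at [e]
   then vanishes as [e -> 0]. *)
Lemma RInt_deriv_mul_ln e : 0 < e <= p ->
  RInt (fun s => F' s * ln s) e p = (F p - F 0) * ln p - (F e - F 0) * ln e - RInt q e p :> R.
Proof.
  intros he.
  assert (Hc : forall x, e <= x <= p -> continuity_pt (fun s => F' s * ln s) x).
  { intros x hx. apply continuity_pt_mult; [apply HF' | apply continuity_pt_ln; lra]. }
  assert (Hplus : RInt (fun s => F' s * ln s + q s) e p
                  = RInt (fun s => F' s * ln s) e p + RInt q e p :> R).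
  { exact (RInt_plus _ _ e p (ex_RInt_continuity_pt _ e p (proj2 he) Hc) (ex_RInt_q e p (proj2 he))). }
  assert (Hparts : RInt (fun s => F' s * ln s + q s) e p
                   = (F p - F 0) * ln p - (F e - F 0) * ln e :> R).
  { apply (RInt_primitive (fun s => (F s - F 0) * ln s)); [lra | |].
    - intros x hx.
      replace (F' x * ln x + q x) with ((F' x - 0) * ln x + (F x - F 0) * / x)
        by (rewrite (divdiff_spec F (F' 0) x); fold q; field; lra).
      exact (derivable_pt_lim_mult (fun s => F s - F 0) ln x _ _
               (derivable_pt_lim_minus _ _ _ _ _ (HF x) (derivable_pt_lim_const (F 0) x))
               (derivable_pt_lim_ln x ltac:(lra))).
    - intros x hx. apply continuity_pt_plus; [apply Hc, hx | apply continuity_pt_q]. }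
  lra.
Qed.

Lemma RInt_deriv_mul_ln_dist e : 0 < e < 1 -> e <= p ->
  Rabs (RInt (fun s => F' s * ln s) e p - I) <= 3 * L * sqrt e.
Proof.
  intros he hep. unfold I.
  rewrite RInt_deriv_mul_ln by lra.
  rewrite <- (RInt_Chasles q 0 e p) by (apply ex_RInt_q; lra).
  change (plus (RInt q 0 e) (RInt q e p)) with (RInt q 0 e + RInt q e p).
  replace ((F p - F 0) * ln p - (F e - F 0) * ln e - RInt q e p
           - ((F p - F 0) * ln p - (RInt q 0 e + RInt q e p)))
    with (RInt q 0 e - (F e - F 0) * ln e) by ring.
  assert (hr : 0 <= sqrt e <= 1 /\ e <= sqrt e).
  { assert (0 <= sqrt e) by apply sqrt_pos.
    assert (sqrt e * sqrt e = e) by (apply sqrt_sqrt; lra). nra. }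
  assert (Hint : Rabs (RInt q 0 e) <= L * sqrt e).
  { eapply Rle_trans; [apply abs_RInt_le_const; [lra | apply ex_RInt_q; lra | ]|].
    - intros t ht. apply HL. lra.
    - pose proof L_nonneg. nra. }
  assert (Hbdry : Rabs ((F e - F 0) * ln e) <= 2 * L * sqrt e).
  { rewrite (divdiff_spec F (F' 0) e). fold q.
    replace (F 0 + e * q e - F 0) with (e * q e) by ring.
    rewrite !Rabs_mult, (Rabs_pos_eq e) by lra.
    assert (hqe : Rabs (q e) <= L) by (apply HL; lra).
    pose proof (mul_abs_ln_le e he). pose proof (Rabs_pos (q e)). pose proof (Rabs_pos (ln e)).
    nra. }
  unfold Rminus at 1. eapply Rle_trans; [apply Rabs_triang|]. rewrite Rabs_Ropp. lra.
Qed.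

Lemma RInt_mul_kernel_dist b : 0 < b ->
  Rabs (RInt (fun s => F s * kernel b s) 0 p - F 0 * RInt (kernel b) 0 p - b ^ 2 / 2 * RInt q 0 p)
    <= L * (b ^ 3 / 3).
Proof.
  intros hb.
  set (m := fun s => s * kernel b s - b ^ 2 / 2).
  assert (Hk : forall x, continuity_pt (kernel b) x) by (intros; apply continuity_pt_kernel, hb).
  assert (Hm : forall x, continuity_pt m x) by (intros; unfold m; continuity_pt_tac).
  assert (Hex : forall g, (forall x, continuity_pt g x) -> ex_RInt g 0 p)
    by (intros g Hg; apply ex_RInt_continuity_pt; [lra | intros; apply Hg]).
  assert (Hpt : forall x, F x * kernel b x = F 0 * kernel b x + (b ^ 2 / 2 * q x + q x * m x)).
  { intros x. rewrite (divdiff_spec F (F' 0) x). fold q. unfold m. ring. }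
  assert (Hsplit : RInt (fun s => F s * kernel b s) 0 p
                   = F 0 * RInt (kernel b) 0 p + (b ^ 2 / 2 * RInt q 0 p + RInt (fun s => q s * m s) 0 p) :> R).
  { rewrite <- RInt_Rmult_l, <- RInt_Rmult_l, <- RInt_Rplus, <- RInt_Rplus.
    - apply RInt_ext. intros x _. apply Hpt.
    all: try apply ex_RInt_Rplus; try apply ex_RInt_scal; apply Hex; intros; continuity_pt_tac. }
  assert (Hdiff : RInt (fun s => F s * kernel b s) 0 p - F 0 * RInt (kernel b) 0 p
                  - b ^ 2 / 2 * RInt q 0 p = RInt (fun s => q s * m s) 0 p :> R)
    by (rewrite Hsplit; ring).
  rewrite Hdiff.
  eapply Rle_trans; [apply abs_RInt_le; [lra | apply Hex; intros; continuity_pt_tac]|].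
  eapply Rle_trans; [apply (RInt_le _ (fun s => L * - m s)); [lra | | | ]|].
  - apply Hex. intros x. apply (continuity_pt_comp (fun s => q s * m s) Rabs);
      [continuity_pt_tac | apply Rcontinuity_abs].
  - apply Hex. intros x. continuity_pt_tac.
  - intros x hx. rewrite Rabs_mult, (Rabs_left1 (m x)).
    + apply Rmult_le_compat_r; [unfold m; pose proof (mul_kernel_le b x hb); lra | apply HL; lra].
    + unfold m. pose proof (mul_kernel_le b x hb). lra.
  - rewrite RInt_Rmult_l by (apply Hex; intros; continuity_pt_tac).
    apply Rmult_le_compat_l; [exact L_nonneg|].
    eapply Rle_trans; [|apply (RInt_kernel_moment_defect_le b p hb); lra].
    right. apply RInt_ext. intros x _. apply Ropp_minus_distr.
Qed.

Lemma improper_int0_mul_ln g : (forall s, 0 < s <= p -> g s = F' s) ->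
  improper_int0 (fun s => g s * ln s) p I.
Proof.
  intros Hg. apply improper_int0_of_rate with (3 * L); [pose proof L_nonneg; lra|].
  intros e he hep. exists (RInt (fun s => F' s * ln s) e p). split.
  - apply is_RInt_RInt_ext; [lra | |].
    + apply ex_RInt_continuity_pt; [lra|]. intros x hx.
      apply continuity_pt_mult; [apply HF' | apply continuity_pt_ln; lra].
    + intros x hx. rewrite Hg by lra. reflexivity.
  - apply RInt_deriv_mul_ln_dist; lra.
Qed.

Lemma RInt_mul_kernel_asymptotics g b : (forall s, 0 <= s <= p -> g s = F s) -> 0 < b < 1 ->
  exists v, is_RInt (fun s => g s * kernel b s) 0 p v /\
    Rabs (v - (- F 0 / 2 * b ^ 2 * ln b
               + (F 0 / 4 + F 0 * ln 2 / 2 + F p * ln p / 2 - I / 2) * b ^ 2))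
      <= (Rabs (F 0) / p ^ 2 + L) * b ^ 3.
Proof.
  intros Hg hb. exists (RInt (fun s => F s * kernel b s) 0 p). split.
  - apply is_RInt_RInt_ext; [lra | |].
    + apply ex_RInt_continuity_pt; [lra|]. intros x _.
      assert (continuity_pt F x) by (apply derivable_continuous_pt; exists (F' x); apply HF).
      apply continuity_pt_mult; [assumption | apply continuity_pt_kernel; lra].
    + intros x hx. rewrite Hg by exact hx. reflexivity.
  - pose proof (RInt_mul_kernel_dist b ltac:(lra)) as Hrem.
    pose proof (RInt_kernel_asymptotics b p hp hb) as Hker.
    set (V := RInt (fun s => F s * kernel b s) 0 p) in *.
    set (K := RInt (kernel b) 0 p) in *.
    set (Kexp := - b ^ 2 * ln b / 2 + (1 / 4 + ln 2 / 2 + ln p / 2) * b ^ 2) in *.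
    assert (E : V - (- F 0 / 2 * b ^ 2 * ln b
                     + (F 0 / 4 + F 0 * ln 2 / 2 + F p * ln p / 2 - I / 2) * b ^ 2)
                = (V - F 0 * K - b ^ 2 / 2 * RInt q 0 p) + F 0 * (K - Kexp))
      by (unfold I, Kexp; field).
    rewrite E. eapply Rle_trans; [apply Rabs_triang|]. rewrite Rabs_mult.
    assert (Rabs (F 0) * Rabs (K - Kexp) <= Rabs (F 0) * (b ^ 3 / p ^ 2))
      by (apply Rmult_le_compat_l; [apply Rabs_pos | exact Hker]).
    assert (0 < b ^ 3) by (apply pow_lt; lra).
    pose proof L_nonneg.
    replace ((Rabs (F 0) / p ^ 2 + L) * b ^ 3) with (Rabs (F 0) * (b ^ 3 / p ^ 2) + L * b ^ 3)
      by (field; lra).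
    nra.
Qed.

End DividedDifference.

Theorem lemma2 (p : R) (f f1 f2 : R -> R) (hp : 0 < p)
  (hf1 : has_deriv_on f f1 0 p)
  (hf2 : has_deriv_on f1 f2 0 p)
  (hc2 : cont_on f2 0 p)
  (h3 : exists (d0 : R) (f3 : R -> R) (M : R),
          0 < d0 /\ d0 <= p /\ has_deriv_on f2 f3 0 d0 /\
          forall s, 0 <= s <= d0 -> Rabs (f3 s) <= M) :
  exists I : R,
    improper_int0 (fun s => f1 s * ln s) p I /\
    exists C d : R, 0 < d /\
      forall b, 0 < b < d ->
        exists v, is_RInt (fun s => f s * (sqrt (s ^ 2 + b ^ 2) - s)) 0 p v /\
          Rabs (v - (- (f 0) / 2 * b ^ 2 * ln b
                     + (f 0 / 4 + f 0 * ln 2 / 2 + f p * ln p / 2 - I / 2) * b ^ 2))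
            <= C * b ^ 3.
Proof.
  set (F := lin_ext p f f1). set (F' := fun s => f1 (clamp p s)).
  assert (HF : forall x, derivable_pt_lim F x (F' x))
    by (intros; apply derivable_pt_lim_lin_ext; assumption).
  assert (HF' : forall x, continuity_pt F' x)
    by (intros; apply (continuity_pt_clamp_comp p hp f1 f2), hf2).
  assert (Hf : forall s, 0 <= s <= p -> f s = F s)
    by (intros; symmetry; apply lin_ext_id; assumption).
  destruct (bounded_on_of_continuity_pt (divdiff F (F' 0)) 0 p ltac:(lra)
              (fun x => continuity_pt_divdiff F F' x HF)) as [L HL].
  exists ((F p - F 0) * ln p - RInt (divdiff F (F' 0)) 0 p). split.
  - apply (improper_int0_mul_ln p F F' hp HF HF' L HL).
    intros s hs. unfold F'. rewrite clamp_id by lra. reflexivity.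
  - exists (Rabs (F 0) / p ^ 2 + L), 1. split; [lra|]. intros b hb.
    rewrite (Hf 0), (Hf p) by lra.
    exact (RInt_mul_kernel_asymptotics p F F' hp HF L HL f b Hf hb).
Qed.
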